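(* Given $\kappa>1$, let $0<\delta<1/4$ be such that $1-2\delta>\delta^{1-1/\kappa}$. Let $G$ be a bipartite graph with vertex parts $U$ and $R$. Then there exists $U'\subseteq U$ such that $G'=G[U'\cup R]$ (with parts $U'$ and $R$) is $\delta^2$-reduced, $d_{\mathrm{avg}}(U')\ge \delta\, d_{\mathrm{avg}}(U)$, and for every real $x\ge\kappa$ we have $$|U'|\,d_{\mathrm{avg}}(U')^x\ \ge\ \delta^x\,|U|\,d_{\mathrm{avg}}(U)^x.$$
   Context: For a set $S$ of vertices of a graph, $d_{\mathrm{avg}}(S)$ is the average degree of the vertices of $S$. A bipartite graph with vertex parts $U$ and $R$ is $\delta$-reduced if every $u\in U$ has degree in $[\delta\, d_{\mathrm{avg}}(U),\ \delta^{-1}d_{\mathrm{avg}}(U)]$ (degrees and averages taken in that bipartite graph). *)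

From HB Require Import structures.
From mathcomp Require Import all_boot all_order all_algebra.
From mathcomp Require Import reals exp.
Unset Strict Implicit. Unset Printing Implicit Defensive.
Import Order.TTheory GRing.Theory Num.Theory.
Local Open Scope ring_scope.

(* A (finite, simple) bipartite graph with vertex parts U and V is given by
   an adjacency relation e : U -> V -> bool. *)

(* degree of u : U (in G[S ∪ V], which equals its degree in G since V is kept) *)
Definition deg (K : realType) (U V : finType) (e : U -> V -> bool) (u : U) : K :=
  (#|[set v | e u v]|)%:R.

(* average degree of the vertices of S ⊆ U; for S empty this is 0/0 = 0 *)
Definition davg (K : realType) (U V : finType) (e : U -> V -> bool)
  (S : {set U}) : K :=
  (\sum_(u in S) @deg K U V e u) / (#|S|)%:R.

Definition reduced (K : realType) (U V : finType) (e : U -> V -> bool)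
  (delta : K) (S : {set U}) : Prop :=
  forall u, u \in S ->
    delta * @davg K U V e S <= @deg K U V e u /\ @deg K U V e u <= delta^-1 * @davg K U V e S.

From HB Require Import structures.
From mathcomp Require Import all_boot all_order all_algebra.
From mathcomp Require Import reals exp.
From mathcomp Require Import lra.
Import Order.TTheory GRing.Theory Num.Theory.
Local Open Scope ring_scope.

(* Let d be the average degree, n = |U|, b = delta d and p = delta^2.  Vertices
   of degree at least b fall into the classes S_j of degrees in
   [b / p^j, b / p^(j+1)]; each class is p-reduced with average degree >= b.
   Call S_j heavy if |S_j| davg(S_j)^kappa >= n b^kappa; since its average
   degree is at least b, a heavy class satisfies the same inequality for every
   exponent x >= kappa.  If no class were heavy, then, as davg(S_j) >= b / p^j,
   the total degree |S_j| davg(S_j) of S_j would be below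
   n b^kappa / (b / p^j)^(kappa-1) = n b q^j with q = p^(kappa-1) < 1 - 2 delta.
   Summing this geometric series and adding the total degree < n b of the
   remaining vertices would give n d <= n delta d (1 + 1/(1-q)) < n d. *)

Lemma exists_consecutive_bracket {K : realType} (f : nat -> K) (t : K) (N : nat) :
  f 0%N <= t -> t < f N -> exists2 j, (j < N)%N & f j <= t <= f j.+1.
Proof.
move=> f0t; elim: N => [|N IH] tfN; first by move: (le_lt_trans f0t tfN); rewrite ltxx.
have [tfN'|fNt] := ltP t (f N).
  by have [j jN hj] := IH tfN'; exists j => //; apply: ltnW.
by exists N => //; rewrite fNt ltW.
Qed.

Lemma geometric_sum_le1 {K : realType} (q : K) (N : nat) :
  0 <= q -> (1 - q) * \sum_(j < N) q ^+ j <= 1.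
Proof.
move=> q0; rewrite -opprB mulNr -subrX1 opprB lerBlDr lerDl.
exact: exprn_ge0.
Qed.

Lemma powR_div_expr {K : realType} (b p r : K) (j : nat) :
  0 <= b -> 0 < p -> (b / p ^+ j) `^ r * (p `^ r) ^+ j = b `^ r.
Proof.
move=> b0 p0; have pj0 : 0 < p ^+ j := exprn_gt0 j p0.
rewrite -(powR_mulrn j (powR_ge0 p r)) powRAC powR_mulrn ?(ltW p0) //.
by rewrite -powRM ?divr_ge0 ?exprn_ge0 ?(ltW p0) // divfK ?gt_eqF.
Qed.

Lemma powR_sqr_le_powR {K : realType} (delta kappa : K) :
  0 < delta <= 1 -> 1 <= kappa ->
  (delta ^+ 2) `^ (kappa - 1) <= delta `^ (1 - kappa^-1).
Proof.
move=> /andP[d0 d1] k1.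
rewrite -(powR_mulrn 2 (ltW d0)) -powRrM; apply: ger_powR; first by rewrite d0.
have k0 : 0 < kappa by lra.
have kinv : kappa * kappa^-1 = 1 by rewrite mulfV ?gt_eqF.
have ki0 : 0 < kappa^-1 by rewrite invr_gt0.
nra.
Qed.

Lemma ler_powR_exponent_shift {K : realType} (c s b m kappa x : K) :
  0 <= c -> 0 < b <= m -> kappa <= x ->
  c * b `^ kappa <= s * m `^ kappa -> c * b `^ x <= s * m `^ x.
Proof.
move=> c0 /andP[b0 bm] kx hk.
have m0 : 0 < m := lt_le_trans b0 bm.
rewrite -(subrKC kappa x) !(@powRD _ _ kappa) ?(gt_eqF b0) ?(gt_eqF m0) ?implybT //.
rewrite !mulrA.
apply: ler_pM; rewrite ?mulr_ge0 ?powR_ge0 //.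
by apply: ge0_ler_powR; rewrite ?nnegrE ?subr_ge0 ?(ltW b0) ?(ltW m0).
Qed.

Section DegreeClasses.

Context {K : realType} {U V : finType} (e : U -> V -> bool).

Local Notation deg := (@deg K U V e).
Local Notation davg := (@davg K U V e).

Lemma deg_ge0 (u : U) : 0 <= deg u.
Proof. exact: ler0n. Qed.

Lemma deg_le_card (u : U) : deg u <= #|V|%:R.
Proof. by rewrite ler_nat max_card. Qed.

Lemma davg_ge0 (S : {set U}) : 0 <= davg S.
Proof. by rewrite divr_ge0 // sumr_ge0 // => u _; apply: deg_ge0. Qed.

Lemma davg_gt0_card {S : {set U}} : 0 < davg S -> (0 < #|S|)%N.
Proof. by rewrite lt0n; apply: contraTneq => S0; rewrite /davg S0 invr0 mulr0 ltxx. Qed.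

Lemma sum_deg_davg (S : {set U}) : \sum_(u in S) deg u = #|S|%:R * davg S.
Proof.
have [/eqP|S0] := posnP #|S|; last by rewrite mulrC divfK // pnatr_eq0 -lt0n.
by rewrite cards_eq0 => /eqP ->; rewrite big_set0 cards0 mul0r.
Qed.

Lemma davg_ge (S : {set U}) (a : K) :
  (0 < #|S|)%N -> (forall u, u \in S -> a <= deg u) -> a <= davg S.
Proof.
move=> S0 aS; rewrite ler_pdivlMr ?ltr0n // mulr_natr -sumr_const.
exact: ler_sum.
Qed.

Lemma davg_le (S : {set U}) (a : K) :
  (0 < #|S|)%N -> (forall u, u \in S -> deg u <= a) -> davg S <= a.
Proof.
move=> S0 Sa; rewrite ler_pdivrMr ?ltr0n // mulr_natr -sumr_const.
exact: ler_sum.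
Qed.

Lemma reduced_deg_window (p a : K) (S : {set U}) :
  0 < p -> (0 < #|S|)%N -> (forall u, u \in S -> a <= deg u <= a / p) ->
  reduced K U V e p S.
Proof.
move=> p0 S0 hS.
have aS : a <= davg S by apply: davg_ge => // u /hS /andP[].
have Sa : davg S <= a / p by apply: davg_le => // u /hS /andP[].
move=> u /hS /andP[au ua]; split.
  by apply: le_trans au; rewrite mulrC -ler_pdivlMr.
by apply: le_trans ua _; rewrite mulrC ler_wpM2l ?invr_ge0 ?(ltW p0).
Qed.

Lemma sum_deg_mul_powR_le (kappa a : K) (S : {set U}) :
  1 < kappa -> 0 <= a -> (forall u, u \in S -> a <= deg u) ->
  (\sum_(u in S) deg u) * a `^ (kappa - 1) <= #|S|%:R * davg S `^ kappa.
Proof.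
move=> k1 a0 aS; rewrite sum_deg_davg.
have [S0|S0] := posnP #|S|; first by rewrite S0 !mul0r.
rewrite -(mulr_powRB1 (davg_ge0 S)) ?(lt_trans ltr01) // mulrA ler_wpM2l //.
  by rewrite mulr_ge0 ?davg_ge0.
apply: ge0_ler_powR; rewrite ?nnegrE ?subr_ge0 ?davg_ge0 ?(ltW k1) //.
exact: davg_ge.
Qed.

Definition deg_class (b p : K) (j : nat) : {set U} :=
  [set u | b / p ^+ j <= deg u <= b / p ^+ j.+1].

Lemma deg_le_classes (b p : K) (N : nat) (u : U) :
  0 <= b -> deg u < b / p ^+ N ->
  deg u <= b + \sum_(j < N) (if u \in deg_class b p j then deg u else 0).
Proof.
move=> b0 uN.
have cls_ge0 (P : pred 'I_N) :
    0 <= \sum_(j < N | P j) (if u \in deg_class b p j then deg u else 0).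
  by apply: sumr_ge0 => j _; case: ifP => // _; apply: deg_ge0.
have [ub|bu] := ltP (deg u) b.
  by apply: le_trans (ltW ub) _; rewrite lerDl cls_ge0.
have b_le : b / p ^+ 0 <= deg u by rewrite expr0 divr1.
have [j jN hj] := @exists_consecutive_bracket K (fun j => b / p ^+ j) _ _ b_le uN.
by rewrite (bigD1 (Ordinal jN)) //= inE hj -[leLHS]add0r lerD // lerDl cls_ge0.
Qed.

Lemma sum_deg_le_classes (b p : K) (N : nat) :
  0 <= b -> (forall u, deg u < b / p ^+ N) ->
  \sum_u deg u <= #|U|%:R * b + \sum_(j < N) \sum_(u in deg_class b p j) deg u.
Proof.
move=> b0 hN.
apply: le_trans (ler_sum _ (fun u _ => deg_le_classes b p N u b0 (hN u))) _.
rewrite big_split /= sumr_const mulr_natl exchange_big /=.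
by apply: lerD => //; apply: ler_sum => j _; rewrite -big_mkcond.
Qed.

Lemma exists_deg_class_bound (b p : K) :
  0 < b -> 0 < p -> p <= 1 / 2 -> exists N, forall u, deg u < b / p ^+ N.
Proof.
move=> b0 p0 p2; exists (Num.Def.archi_bound (#|V|%:R / b)) => u.
apply: le_lt_trans (deg_le_card u) _.
rewrite mulrC -exprVn -ltr_pdivrMr //.
apply: lt_le_trans (upper_nthrootP (leqnn _)) _.
rewrite lerXn2r ?nnegrE ?invr_ge0 ?(ltW p0) //.
by rewrite -(ler_pM2r p0) mulVf ?gt_eqF //; lra.
Qed.

Lemma sum_deg_light_class (kappa b p c : K) (j : nat) :
  1 < kappa -> 0 < b -> 0 < p ->
  #|deg_class b p j|%:R * davg (deg_class b p j) `^ kappa <= c * b `^ kappa ->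
  \sum_(u in deg_class b p j) deg u <= c * b * (p `^ (kappa - 1)) ^+ j.
Proof.
move=> k1 b0 p0 light.
have bk0 : 0 < b `^ (kappa - 1) := powR_gt0 _ b0.
have qj0 : 0 <= (p `^ (kappa - 1)) ^+ j := exprn_ge0 j (powR_ge0 _ _).
have aj0 : 0 <= b / p ^+ j := divr_ge0 (ltW b0) (exprn_ge0 j (ltW p0)).
have classP u : u \in deg_class b p j -> b / p ^+ j <= deg u.
  by rewrite inE => /andP[].
have := @sum_deg_mul_powR_le kappa _ _ k1 aj0 classP.
move=> /le_trans/(_ light)/(ler_wpM2r qj0) bound.
rewrite -mulrA powR_div_expr ?(ltW b0) // in bound.
rewrite -(ler_pM2r bk0); apply: le_trans bound _.
by rewrite -(mulr_powRB1 (ltW b0)) ?(lt_trans ltr01) // mulrA mulrAC.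
Qed.

Lemma heavy_window_spec {kappa p a b c : K} {S : {set U}} :
  0 < p -> 0 < b <= a -> 0 < c -> (forall u, u \in S -> a <= deg u <= a / p) ->
  c * b `^ kappa <= #|S|%:R * davg S `^ kappa ->
  [/\ reduced K U V e p S, b <= davg S &
      forall x, kappa <= x -> c * b `^ x <= #|S|%:R * davg S `^ x].
Proof.
move=> p0 /andP[b0 ba] c0 window heavy.
have S0 : (0 < #|S|)%N.
  rewrite lt0n; apply: contraTneq heavy => ->.
  by rewrite mul0r -ltNge mulr_gt0 ?powR_gt0.
have bS : b <= davg S.
  by apply: le_trans ba _; apply: davg_ge => // u /window /andP[].
split; first exact: reduced_deg_window window.
- exact: bS.
- by move=> x kx; apply: ler_powR_exponent_shift heavy; rewrite ?b0 ?bS ?(ltW c0).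
Qed.

Lemma exists_heavy_deg_class {kappa delta : K} :
  1 < kappa -> 0 < delta -> delta < 1 / 4 ->
  delta `^ (1 - kappa^-1) < 1 - 2 * delta -> 0 < davg [set: U] ->
  let b := delta * davg [set: U] in
  exists j, #|U|%:R * b `^ kappa <=
    #|deg_class b (delta ^+ 2) j|%:R * davg (deg_class b (delta ^+ 2) j) `^ kappa.
Proof.
move=> k1 d0 d14 hyp dpos b; set d := davg [set: U] in dpos b *.
set p := delta ^+ 2; set n : K := #|U|%:R.
have b0 : 0 < b by rewrite mulr_gt0.
have p0 : 0 < p by rewrite exprn_gt0.
have [N hN] : exists N, forall u, deg u < b / p ^+ N.
  by apply: exists_deg_class_bound => //; rewrite /p expr2; nra.
have [/existsP[j heavy]|/existsPn light] :=
  boolP [exists j : 'I_N,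
           n * b `^ kappa <= #|deg_class b p j|%:R * davg (deg_class b p j) `^ kappa].
  by exists j.
exfalso.
set q := p `^ (kappa - 1).
have q0 : 0 <= q := powR_ge0 _ _.
have hq : q < 1 - 2 * delta.
  apply: le_lt_trans hyp; apply: powR_sqr_le_powR; last exact: ltW.
  by rewrite d0; lra.
have n0 : 0 < n by rewrite ltr0n -cardsT davg_gt0_card.
have Esum : \sum_u deg u = n * d.
  rewrite /n -cardsT -sum_deg_davg; apply: eq_bigl => u; by rewrite in_setT.
have total : n * d <= n * b + n * b * \sum_(j < N) q ^+ j.
  rewrite -Esum mulr_sumr; apply: le_trans (sum_deg_le_classes b p N (ltW b0) hN) _.
  rewrite lerD2l; apply: ler_sum => j _.
  by apply: sum_deg_light_class => //; rewrite ltW // ltNge light.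
have G0 : 0 <= \sum_(j < N) q ^+ j by apply: sumr_ge0 => j _; apply: exprn_ge0.
have hG := geometric_sum_le1 q N q0.
set G := \sum_(j < N) q ^+ j in total G0 hG; rewrite /b in total.
have nd0 : 0 < n * d by rewrite mulr_gt0.
have : 1 <= delta * (1 + G) by rewrite -(ler_pM2l nd0); nra.
(* (1 - q) G <= 1 and 1 - q > 2 delta give delta G <= 1/2 < 1 - delta. *)
nra.
Qed.

End DegreeClasses.

Theorem lemma3p3 (K : realType) (kappa delta : K) (U V : finType)
  (e : U -> V -> bool) :
  1 < kappa -> 0 < delta -> delta < 1 / 4 ->
  delta `^ (1 - kappa^-1) < 1 - 2 * delta ->
  exists U' : {set U},
    @reduced K U V e (delta ^+ 2) U' /\
    delta * @davg K U V e [set: U] <= @davg K U V e U' /\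
    (forall x : K, kappa <= x ->
       delta `^ x * (#|U|)%:R * (@davg K U V e [set: U]) `^ x
       <= (#|U'|)%:R * (@davg K U V e U') `^ x).
Proof.
move=> k1 d0 d14 hyp; set d := davg K U V e [set: U].
have [d_eq0|dpos] := eqVneq d 0.
  exists set0; split; first by move=> u; rewrite in_set0.
  split; first by rewrite d_eq0 mulr0 (davg_ge0 e).
  move=> x kx; rewrite d_eq0 powR0 ?mulr0 ?cards0 ?mul0r //.
  by rewrite gt_eqF // (lt_le_trans _ kx) // (lt_trans ltr01).
have {dpos}dpos : 0 < d by rewrite lt_def dpos (davg_ge0 e).
have [j heavy] := exists_heavy_deg_class e k1 d0 d14 hyp dpos.
set b := delta * d in heavy; set p := delta ^+ 2 in heavy.
have b0 : 0 < b by rewrite mulr_gt0.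
have p0 : 0 < p by rewrite exprn_gt0.
have p1 : p <= 1 by rewrite /p expr2; nra.
have n0 : 0 < #|U|%:R :> K by rewrite ltr0n -cardsT (davg_gt0_card e dpos).
have window u : u \in deg_class e b p j ->
    b / p ^+ j <= deg K U V e u <= b / p ^+ j / p.
  by rewrite inE exprSr invfM mulrA.
have ba : 0 < b <= b / p ^+ j.
  by rewrite b0 ler_pdivlMr ?exprn_gt0 //= ler_piMr ?(ltW b0) // exprn_ile1 ?(ltW p0).
have [reduced_j b_le powers] :=
  heavy_window_spec e p0 ba n0 window heavy.
exists (deg_class e b p j); split => //; split => // x kx.
by rewrite mulrAC -powRM ?(ltW d0) ?(davg_ge0 e) // mulrC powers.
Qed.
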